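(* Let $r>0$ and let $B_r=\{F\in CBV(I):\|F\|_{BV}\leq r\}$. Then there exist a subinterval $J\subseteq\mathbb{R}$ and an uncountable family $\{F_h\in CBV(I):h\in J\}$ such that: $F_h\in B_r$ for each $h\in J$; $F_h(0)=F_h(1)=0$ for each $h\in J$; and $\|F_{h_1}-F_{h_2}\|_{BV}=2r$ for any distinct $h_1,h_2\in J$.
   Context: $I=[0,1]$. $CBV(I)$ is the space of continuous real functions $F$ on $I$ of bounded variation, i.e. with $V(F)=\sup\sum_{i=1}^m|F(x_i)-F(x_{i-1})|<\infty$, the supremum over partitions $0=x_0<\dots<x_m=1$; it is normed by $\|F\|_{BV}=|F(0)|+V(F)$. *)

From mathcomp Require Import all_boot all_order all_algebra.
From mathcomp Require Import all_classical all_reals all_analysis.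
Set Implicit Arguments. Unset Strict Implicit. Unset Printing Implicit Defensive.
Import Order.TTheory GRing.Theory Num.Theory numFieldNormedType.Exports.
Local Open Scope classical_set_scope.
Local Open Scope ring_scope.

Definition CBV {R : realType} (F : R -> R) : Prop :=
  {within `[0, 1], continuous F} /\ bounded_variation 0 1 F.

(* V(F) = sup of variation sums (total_variation, an extended real, finite
   for F of bounded variation); ||F||_BV = |F(0)| + V(F). *)
Definition BVnorm {R : realType} (F : R -> R) : R :=
  `|F 0| + fine (total_variation 0 1 F).

From mathcomp Require Import all_boot all_order all_algebra.
From mathcomp Require Import all_classical all_reals all_analysis.
From mathcomp Require Import ring lra zify.
Import Order.TTheory GRing.Theory Num.Theory numFieldNormedType.Exports.
Set Implicit Arguments. Unset Strict Implicit. Unset Printing Implicit Defensive.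
Local Open Scope classical_set_scope.
Local Open Scope ring_scope.

(* Encode a bit sequence t and a point y of [0, 1) as the base-6 number
   code t y = sum_k (1 + 2 t_k + y_k) / 6^(k+1), where y_k is the k-th binary
   digit of y.  For fixed t, y |-> code t y is strictly increasing, so its
   generalized inverse code_inv t is continuous and nondecreasing from 0 to 1,
   and it increases only on 6-adic intervals whose labels, read in base 6,
   carry the bits of t.  If t and t' differ before position N, no interval of
   the grid of mesh 6^-N carries increase of both code_inv t and code_inv t'.
   Take F_h = r/2 (code_inv t_h^+ - code_inv t_h^-), where t_h^+- prefix the
   binary digits of h with the bit 1 resp. 0.  Then V(F_h) <= r, and for
   h1 <> h2 the four inverses in F_h1 - F_h2 split into the two groups
   {t_h1^+, t_h2^-} and {t_h1^-, t_h2^+} whose increases are disjoint on a fine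
   enough grid, so V(F_h1 - F_h2) is the total increase 4 * r/2 = 2r. *)

Fixpoint base6_prefix (A : nat -> nat) (N : nat) : nat :=
  if N is N'.+1 then (6 * base6_prefix A N' + A N')%N else 0%N.

Lemma base6_prefix_eq (A B : nat -> nat) N :
  (forall k, (k < N)%N -> A k = B k) -> base6_prefix A N = base6_prefix B N.
Proof.
elim: N => [//|N IH] eqAB /=.
by rewrite IH ?eqAB// => k kN; apply: eqAB; exact: ltnW.
Qed.

Lemma base6_prefix_inj (A B : nat -> nat) N :
  (forall k, (A k < 6)%N) -> (forall k, (B k < 6)%N) ->
  base6_prefix A N = base6_prefix B N -> forall k, (k < N)%N -> A k = B k.
Proof.
move=> A6 B6; elim: N => [//|N IH] /= eqAB k.
have [AN BN] := (A6 N, B6 N).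
rewrite ltnS leq_eqVlt => /predU1P[->|kN]; first by lia.
by apply: IH kN; lia.
Qed.

Lemma base6_prefix_lt (A B : nat -> nat) N :
  (forall k, (k < N)%N -> A k = B k) -> (A N < B N)%N ->
  (base6_prefix A N.+1 < base6_prefix B N.+1)%N.
Proof. by move=> eqAB ltN /=; rewrite (base6_prefix_eq eqAB); lia. Qed.

Section base6.
Context {R : realType}.

Definition base6 (A : nat -> nat) : R :=
  fine (\sum_(k <oo) ((A k)%:R / 6 ^+ k.+1 : R)%:E).

Lemma sum_4_div_pow6 n :
  \sum_(0 <= k < n) (4 / 6 ^+ k.+1 : R) = 4 / 5 - 4 / (5 * 6 ^+ n).
Proof.
elim: n => [|n IH]; first by rewrite big_geq// expr0 mulr1 subrr.
rewrite big_nat_recr//= IH exprS.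
have pow6_neq0 : (6 : R) ^+ n != 0 by rewrite expf_neq0.
by field; rewrite pow6_neq0.
Qed.

Lemma base6_series_itv (A : nat -> nat) : (forall k, (A k <= 4)%N) ->
  (0 <= \sum_(k <oo) (((A k)%:R / 6 ^+ k.+1 : R)%:E) <= (4 / 5 : R)%:E)%E.
Proof.
move=> A4; apply/andP; split.
  by apply: nneseries_ge0 => k _; rewrite lee_fin divr_ge0.
apply: (@le_trans _ _ (\sum_(k <oo) ((4 / 6 ^+ k.+1 : R)%:E))%E).
  apply: lee_nneseries => [k _ _|k _]; first by rewrite lee_fin divr_ge0.
  by rewrite lee_fin ler_pM2r ?invr_gt0 ?exprn_gt0// ler_nat.
apply: lime_le.
  by apply: is_cvg_nneseries => k _ _; rewrite lee_fin divr_ge0.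
apply: nearW => n /=; rewrite sumEFin sum_4_div_pow6 lee_fin.
by rewrite lerBlDr lerDl divr_ge0// ?mulr_ge0// exprn_ge0.
Qed.

Lemma base6_series_fin_num (A : nat -> nat) : (forall k, (A k <= 4)%N) ->
  (\sum_(k <oo) ((A k)%:R / 6 ^+ k.+1 : R)%:E)%E \is a fin_num.
Proof.
move=> /base6_series_itv /andP[ge0 le45].
by rewrite ge0_fin_numE// (le_lt_trans le45)// ltry.
Qed.

Lemma base6_ge0 (A : nat -> nat) : (forall k, (A k <= 4)%N) -> 0 <= base6 A.
Proof. by move=> /base6_series_itv /andP[? _]; exact: fine_ge0. Qed.

Lemma base6_le (A : nat -> nat) : (forall k, (A k <= 4)%N) -> base6 A <= 4 / 5.
Proof.
move=> A4; have /andP[_ le45] := base6_series_itv A4.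
by rewrite -lee_fin fineK// (base6_series_fin_num A4).
Qed.

Lemma base6_recl (A : nat -> nat) : (forall k, (A k <= 4)%N) ->
  base6 A = ((A 0%N)%:R + base6 (fun k => A k.+1)) / 6.
Proof.
move=> A4.
have ge0 k : (0 <= ((A k)%:R / 6 ^+ k.+1 : R)%:E)%E by rewrite lee_fin divr_ge0.
rewrite /base6 (@nneseries_recl R xpredT _ (fun k _ => ge0 k))//.
rewrite -(nneseries_addn 1 (fun k => ge0 k)).
rewrite (eq_eseriesr (g := fun k =>
    ((6^-1 : R)%:E * (((A k.+1)%:R / 6 ^+ k.+1 : R)%:E))%E)); last first.
  by move=> i _; rewrite addn1 -EFinM exprS; congr (_%:E); rewrite invfM; field.
rewrite nneseriesZl; last by move=> k _; rewrite lee_fin divr_ge0.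
rewrite -(fineK (base6_series_fin_num (fun k => A4 k.+1))) -EFinM -EFinD /=.
by rewrite expr1 mulrDl [6^-1 * _]mulrC.
Qed.

Lemma base6_split (A : nat -> nat) N : (forall k, (A k <= 4)%N) ->
  6 ^+ N * base6 A = (base6_prefix A N)%:R + base6 (fun k => A (k + N)%N).
Proof.
move=> A4; elim: N => [|N IH].
  by rewrite expr0 mul1r add0r; congr base6; apply/funext => k; rewrite addn0.
rewrite exprS -mulrA IH (@base6_recl (fun k => A (k + N)%N))// natrD natrM.
have -> : (fun k => A (k.+1 + N)%N) = (fun k => A (k + N.+1)%N).
  by apply/funext => k; rewrite addSnnS.
by rewrite add0n; field.
Qed.

Lemma base6_gt0 (A : nat -> nat) : (forall k, (0 < A k <= 4)%N) -> 0 < base6 A.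
Proof.
move=> A14; have A4 k : (A k <= 4)%N by case/andP: (A14 k).
rewrite base6_recl//.
have := base6_ge0 (fun k => A4 k.+1).
have : 1 <= ((A 0%N)%:R : R) by rewrite ler1n; case/andP: (A14 0%N).
lra.
Qed.

Lemma base6_cell (A : nat -> nat) N : (forall k, (0 < A k <= 4)%N) ->
  (base6_prefix A N)%:R < 6 ^+ N * base6 A <= (base6_prefix A N)%:R + 1.
Proof.
move=> A14; have A4 k : (A k <= 4)%N by case/andP: (A14 k).
rewrite base6_split//.
have := @base6_gt0 (fun k => A (k + N)%N) (fun k => A14 _).
have := @base6_le (fun k => A (k + N)%N) (fun k => A4 _).
move=> ? ?; apply/andP; split; lra.
Qed.

End base6.

Section binary_digits.
Context {R : realType}.

Definition dyadic_floor (y : R) (k : nat) : nat := Num.truncn (y * 2 ^+ k).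

Definition binary_digit (y : R) (k : nat) : bool := odd (dyadic_floor y k.+1).

Lemma dyadic_floor0 (y : R) : 0 <= y < 1 -> dyadic_floor y 0 = 0%N.
Proof. by move=> y01; rewrite /dyadic_floor expr0 mulr1; apply: truncn_def. Qed.

Lemma le_dyadic_floor (y y' : R) k :
  y <= y' -> (dyadic_floor y k <= dyadic_floor y' k)%N.
Proof. by move=> le_yy'; apply: le_truncn; rewrite ler_pM2r// exprn_gt0. Qed.

Lemma dyadic_floorS (y : R) k : 0 <= y ->
  dyadic_floor y k.+1 = (binary_digit y k + (dyadic_floor y k).*2)%N.
Proof.
move=> y0; rewrite /binary_digit /dyadic_floor.
have /andP[lo hi] := truncn_itv (mulr_ge0 y0 (exprn_ge0 k (ler0n R 2))).
set m := Num.truncn (y * 2 ^+ k) in lo hi *.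
have /andP[lo' hi'] : ((m.*2)%N <= Num.truncn (y * 2 ^+ k.+1) < (m.*2).+2)%N.
  rewrite truncn_ge_nat ?truncn_lt_nat ?mulr_ge0 ?exprn_ge0// exprSr mulrA.
  by rewrite -doubleS -!muln2 !natrM ltr_pM2r// ler_pM2r// lo -natr1 hi.
have [->|->] : Num.truncn (y * 2 ^+ k.+1) = m.*2 \/
               Num.truncn (y * 2 ^+ k.+1) = (m.*2).+1 by lia.
  by rewrite odd_double.
by rewrite /= odd_double.
Qed.

Lemma dyadic_floor_sep (y y' : R) : 0 <= y -> y < y' ->
  exists n, (dyadic_floor y n < dyadic_floor y' n)%N.
Proof.
move=> y0 lt_yy'; set d := y' - y.
have d0 : 0 < d by rewrite subr_gt0.
exists (Num.truncn d^-1).+1; set n := (Num.truncn d^-1).+1.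
have : d^-1 < 2 ^+ n.
  apply: (lt_le_trans (truncnS_gt _)).
  by rewrite -natrX ler_nat ltnW// ltn_expl.
rewrite -[d^-1]mul1r ltr_pdivrMr// /d mulrC mulrBl => gap.
have /andP[lo _] := truncn_itv (mulr_ge0 y0 (exprn_ge0 n (ler0n R 2))).
by rewrite /dyadic_floor truncn_gt_nat -natr1; lra.
Qed.

Lemma binary_digit_first_diff (y y' : R) : 0 <= y -> y < y' -> y' < 1 ->
  exists n, [/\ forall k, (k < n)%N -> binary_digit y k = binary_digit y' k,
             binary_digit y n = false & binary_digit y' n = true].
Proof.
move=> y0 lt_yy' y'1; have y'0 : 0 <= y' by rewrite (le_trans y0)// ltW.
have [[|m] lt_m min_m] := ex_minnP (dyadic_floor_sep y0 lt_yy').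
  by rewrite !dyadic_floor0 ?y0 ?y'0 ?(lt_trans lt_yy') in lt_m.
have eq_floor k : (k <= m)%N -> dyadic_floor y k = dyadic_floor y' k.
  move=> km; have := le_dyadic_floor k (ltW lt_yy').
  rewrite leq_eqVlt => /predU1P[//|/min_m]; lia.
have lt_digit : (binary_digit y m < binary_digit y' m)%N.
  by move: lt_m; rewrite !dyadic_floorS// eq_floor// ltn_add2r.
exists m; split=> [k km||]; first by rewrite /binary_digit eq_floor.
all: by move: lt_digit; case: (binary_digit y m); case: (binary_digit y' m).
Qed.

Lemma binary_digit_inj (y y' : R) : 0 <= y < 1 -> 0 <= y' < 1 -> y != y' ->
  exists k, binary_digit y k != binary_digit y' k.
Proof.
move=> /andP[y0 y1] /andP[y'0 y'1]; rewrite neq_lt => /orP[lt|lt].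
  have [n [_ dy dy']] := binary_digit_first_diff y0 lt y'1.
  by exists n; rewrite dy dy'.
have [n [_ dy' dy]] := binary_digit_first_diff y'0 lt y1.
by exists n; rewrite dy dy'.
Qed.

End binary_digits.

Section code.
Context {R : realType}.
Implicit Types (t : nat -> bool) (y : R).

(* The digits avoid 0 and 5, so code t y lies in the interior of the 6-adic
   interval labelled by its first N digits, for every N. *)
Definition code_digit t y (k : nat) : nat := (1 + 2 * t k + binary_digit y k)%N.

Definition code t y : R := base6 (code_digit t y).

Lemma code_digit_itv t y k : (0 < code_digit t y k <= 4)%N.
Proof. by rewrite /code_digit; case: (t k); case: (binary_digit y k). Qed.

Lemma code_digit_le4 t y k : (code_digit t y k <= 4)%N.
Proof. by case/andP: (code_digit_itv t y k). Qed.

Lemma code_gt0 t y : 0 < code t y.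
Proof. exact/base6_gt0/code_digit_itv. Qed.

Lemma code_le45 t y : code t y <= 4 / 5.
Proof. exact/base6_le/code_digit_le4. Qed.

Lemma code_cell t y N :
  (base6_prefix (code_digit t y) N)%:R < 6 ^+ N * code t y <=
  (base6_prefix (code_digit t y) N)%:R + 1.
Proof. exact/base6_cell/code_digit_itv. Qed.

Lemma code_cell_index t y N (j : nat) :
  j%:R < 6 ^+ N * code t y <= j%:R + 1 -> j = base6_prefix (code_digit t y) N.
Proof.
move=> /andP[lo hi]; have /andP[lo' hi'] := code_cell t y N.
have : (j%:R < (base6_prefix (code_digit t y) N)%:R + 1 :> R) by lra.
have : ((base6_prefix (code_digit t y) N)%:R < j%:R + 1 :> R) by lra.
rewrite !natr1 !ltr_nat; lia.
Qed.

Lemma code_cell_tag t t' y y' N (j : nat) :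
  j%:R < 6 ^+ N * code t y <= j%:R + 1 ->
  j%:R < 6 ^+ N * code t' y' <= j%:R + 1 ->
  forall k, (k < N)%N -> t k = t' k.
Proof.
move=> /code_cell_index -> /code_cell_index eq_prefix k kN.
have lt6 t0 y0 i : (code_digit t0 y0 i < 6)%N.
  by apply: leq_ltn_trans (code_digit_le4 t0 y0 i) _.
have := base6_prefix_inj (lt6 t y) (lt6 t' y') eq_prefix kN.
rewrite /code_digit.
by case: (t k); case: (t' k); case: (binary_digit y k); case: (binary_digit y' k).
Qed.

Lemma lt_code t y y' : 0 <= y -> y < y' -> y' < 1 -> code t y < code t y'.
Proof.
move=> y0 lt_yy' y'1.
have [n [eq_digits dy dy']] := binary_digit_first_diff y0 lt_yy' y'1.
have lt_prefix : (base6_prefix (code_digit t y) n.+1 <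
                  base6_prefix (code_digit t y') n.+1)%N.
  apply: base6_prefix_lt; first by move=> k kn; rewrite /code_digit eq_digits.
  by rewrite /code_digit dy dy' addn0 addn1.
have /andP[_ hi] := code_cell t y n.+1.
have /andP[lo _] := code_cell t y' n.+1.
move: lt_prefix; rewrite -(ler_nat R) -natr1 => lt_prefix.
by rewrite -(ltr_pM2l (exprn_gt0 n.+1 (ltr0n R 6))); lra.
Qed.

Lemma le_code t y y' : 0 <= y -> y <= y' -> y' < 1 -> code t y <= code t y'.
Proof.
move=> y0; rewrite le_eqVlt => /predU1P[-> //|lt_yy' y'1].
exact/ltW/lt_code.
Qed.

End code.

Section code_inverse.
Context {R : realType}.
Implicit Types (t : nat -> bool) (x y z : R).

(* 0 is added so that the set is never empty. *)
Definition code_sublevel t x : set R :=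
  [set z | z = 0 \/ (0 <= z < 1 /\ code t z <= x)].

Definition code_inv t x : R := sup (code_sublevel t x).

Lemma code_sublevel0 t x : code_sublevel t x 0.
Proof. by left. Qed.

Lemma code_sublevel_ub t x : ubound (code_sublevel t x) 1.
Proof. by move=> z [->|[/andP[_ /ltW]]]. Qed.

Lemma code_inv_ub t x z : code_sublevel t x z -> z <= code_inv t x.
Proof. by apply: ub_le_sup; exists 1; exact: code_sublevel_ub. Qed.

Lemma code_inv_ge0 t x : 0 <= code_inv t x.
Proof. exact/code_inv_ub/code_sublevel0. Qed.

Lemma code_inv_le1 t x : code_inv t x <= 1.
Proof. by apply: ge_sup; [exists 0; exact: code_sublevel0|exact: code_sublevel_ub]. Qed.

Lemma code_inv_nondecreasing t : nondecreasing (code_inv t).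
Proof.
move=> x x' le_xx'; apply: ge_sup; first by exists 0; exact: code_sublevel0.
move=> z [->|[z01 le_zx]]; first exact: code_inv_ge0.
by apply: code_inv_ub; right; split => //; exact: le_trans le_xx'.
Qed.

Lemma code_inv_flat t x x' : x <= x' ->
  (forall y, 0 <= y < 1 -> ~ (x < code t y <= x')) -> code_inv t x = code_inv t x'.
Proof.
move=> le_xx' flat; congr sup; apply/seteqP; split.
  move=> z [->|[z01 le_zx]]; first by left.
  by right; split => //; exact: le_trans le_xx'.
move=> z [->|[z01 le_zx']]; first by left.
right; split => //; rewrite leNgt; apply/negP => lt_xz.
by apply: (flat z z01); rewrite lt_xz le_zx'.
Qed.

Lemma code_inv0 t : code_inv t 0 = 0.
Proof.
apply/eqP; rewrite eq_le code_inv_ge0 andbT; apply: ge_sup; first by exists 0; left.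
by move=> z [->//|[_]]; rewrite leNgt code_gt0.
Qed.

Lemma code_inv1 t : code_inv t 1 = 1.
Proof.
apply/eqP; rewrite eq_le code_inv_le1 leNgt; apply/negP => lt_inv1.
have p0 := code_inv_ge0 t 1; set p := code_inv t 1 in lt_inv1 p0 *.
have : code_sublevel t 1 ((p + 1) / 2).
  right; split; first by apply/andP; split; lra.
  by have := code_le45 t ((p + 1) / 2); lra.
by move/code_inv_ub; rewrite -/p; lra.
Qed.

Lemma code_inv_le_near t x e : 0 < e ->
  exists2 d, 0 < d & forall z, z < x + d -> code_inv t z <= code_inv t x + e.
Proof.
move=> e0; set y := code_inv t x + e.
have [y1|y1] := leP 1 y.
  by exists 1 => // z _; exact: le_trans (code_inv_le1 t z) y1.
have y0 : 0 <= y by rewrite /y; have := code_inv_ge0 t x; lra.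
have lt_x_code : x < code t y.
  rewrite ltNge; apply/negP => le_code_x.
  have /code_inv_ub : code_sublevel t x y by right; split => //; apply/andP.
  by rewrite /y; lra.
exists (code t y - x); first by rewrite subr_gt0.
move=> z; rewrite addrC subrK => lt_z_code.
apply: ge_sup; first by exists 0; left.
move=> w [->|[/andP[w0 w1] le_code_z]]; first exact: y0.
rewrite leNgt; apply/negP => lt_yw.
by have := le_code t y0 (ltW lt_yw) w1; lra.
Qed.

Lemma code_inv_ge_near t x e : 0 < e ->
  exists2 d, 0 < d & forall z, x - d < z -> code_inv t x - e <= code_inv t z.
Proof.
move=> e0; have [inv_le_e|e_lt_inv] := leP (code_inv t x) e.
  by exists 1 => // z _; have := code_inv_ge0 t z; lra.
set y := code_inv t x - e.
have y0 : 0 < y by rewrite /y; lra.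
have [w Sw lt_yw] : exists2 w, code_sublevel t x w & y < w.
  by apply: sup_gt; [exists 0; left|rewrite -/(code_inv t x) /y; lra].
case: Sw => [w0|[/andP[w0 w1] le_code_x]]; first by move: lt_yw; rewrite w0; lra.
have lt_code : code t y < code t w by apply: lt_code => //; exact: ltW.
exists (x - code t y); first by rewrite subr_gt0; lra.
move=> z; rewrite opprB addrC subrK => lt_code_z.
apply: code_inv_ub; right; split; last exact: ltW.
by rewrite (ltW y0) (lt_trans lt_yw).
Qed.

Lemma code_inv_continuous t : continuous (code_inv t).
Proof.
move=> x; apply/cvgrPdist_le => /= e e0.
have [d1 d10 near_le] := code_inv_le_near t x e0.
have [d2 d20 near_ge] := code_inv_ge_near t x e0.
apply/nbhs_ballP; exists (Num.min d1 d2) => /=; first by rewrite lt_min d10 d20.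
move=> z; rewrite /ball /= lt_min !ltr_norml => /andP[/andP[? ?] /andP[? ?]].
have := near_le z; have := near_ge z; rewrite ler_norml; lra.
Qed.

End code_inverse.

Section variation_orthogonal.
Context {R : realType}.
Implicit Types (a b : R) (f g : R -> R) (s : seq R).

Lemma normrB_mul_eq0 (u v : R) : u * v = 0 -> `|u - v| = `|u| + `|v|.
Proof.
move/eqP; rewrite mulf_eq0 => /orP[]/eqP->.
  by rewrite sub0r normrN normr0 add0r.
by rewrite subr0 normr0 addr0.
Qed.

Lemma variationB_orth a b f g s :
  (forall n, (n < size s)%N ->
     (f (nth b (a :: s) n.+1) - f (nth b (a :: s) n)) *
     (g (nth b (a :: s) n.+1) - g (nth b (a :: s) n)) = 0) ->
  variation a b (f \- g) s = variation a b f s + variation a b g s.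
Proof.
move=> orth; rewrite /variation -big_split /=; apply: eq_big_nat => n /andP[_ ns].
by rewrite -normrB_mul_eq0 ?orth//; congr `|_|; ring.
Qed.

Lemma total_variationB_le a b f g : a <= b ->
  {in `[a, b] &, nondecreasing_fun f} -> {in `[a, b] &, nondecreasing_fun g} ->
  (total_variation a b (f \- g)%R <= (f b - f a + (g b - g a))%:E)%E.
Proof.
move=> ab ndf ndg; apply: le_trans (total_variation_le f (\- g) ab) _.
by rewrite total_variationN !nondecreasing_total_variation.
Qed.

Lemma total_variationB_orth a b f g s : itv_partition a b s ->
  {in `[a, b] &, nondecreasing_fun f} -> {in `[a, b] &, nondecreasing_fun g} ->
  (forall n, (n < size s)%N ->
     (f (nth b (a :: s) n.+1) - f (nth b (a :: s) n)) *
     (g (nth b (a :: s) n.+1) - g (nth b (a :: s) n)) = 0) ->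
  total_variation a b (f \- g) = (f b - f a + (g b - g a))%:E.
Proof.
move=> abs ndf ndg orth; apply/le_anti/andP; split.
  exact/total_variationB_le/ndg/ndf/(itv_partition_le abs).
apply: ereal_sup_ubound; exists (variation a b (f \- g) s).
  exact: variations_variation.
by rewrite variationB_orth// !nondecreasing_variation.
Qed.

End variation_orthogonal.

Section grid.
Context {R : realType}.

Definition grid_pt (N j : nat) : R := j%:R / 6 ^+ N.

Definition grid (N : nat) : seq R := map (grid_pt N) (iota 1 (6 ^ N)).

Lemma grid_pt0 N : grid_pt N 0 = 0.
Proof. by rewrite /grid_pt mul0r. Qed.

Lemma grid_pt_max N : grid_pt N (6 ^ N) = 1.
Proof. by rewrite /grid_pt natrX mulfV// expf_neq0. Qed.

Lemma grid_pt_lt N : {homo grid_pt N : i j / (i < j)%N >-> i < j}.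
Proof. by move=> i j ij; rewrite /grid_pt ltr_pM2r ?invr_gt0 ?exprn_gt0// ltr_nat. Qed.

Lemma size_grid N : size (grid N) = (6 ^ N)%N.
Proof. by rewrite size_map size_iota. Qed.

Lemma nth_grid N n : (n <= 6 ^ N)%N -> nth 1 (0 :: grid N) n = grid_pt N n.
Proof.
case: n => [|n] nN /=; first by rewrite grid_pt0.
by rewrite (nth_map 0%N) ?size_iota// nth_iota// add1n.
Qed.

Lemma itv_partition_grid N : itv_partition 0 1 (grid N).
Proof.
split.
  have : sorted <%R (map (grid_pt N) (iota 0 (6 ^ N).+1)).
    by apply: homo_sorted (@grid_pt_lt N) _ _; exact: iota_ltn_sorted.
  by rewrite /= grid_pt0.
rewrite -(grid_pt0 N) last_map -nth_last size_iota nth_iota ?prednK ?expn_gt0//.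
by rewrite add1n prednK ?expn_gt0// grid_pt_max.
Qed.

Lemma grid_cellE N n x :
  (grid_pt N n < x <= grid_pt N n.+1) = (n%:R < 6 ^+ N * x <= n%:R + 1).
Proof.
have pow6_gt0 : (0 : R) < 6 ^+ N by rewrite exprn_gt0.
by rewrite /grid_pt ltr_pdivrMr// ler_pdivlMr// mulrC natr1.
Qed.

Lemma code_inv_grid_orth t t' k N n : (k < N)%N -> t k != t' k ->
  (code_inv t (grid_pt N n.+1) - code_inv t (grid_pt N n)) *
  (code_inv t' (grid_pt N n.+1) - code_inv t' (grid_pt N n)) = 0.
Proof.
move=> kN neq_tk.
have le_grid : grid_pt N n <= grid_pt N n.+1 by exact/ltW/grid_pt_lt.
have [[y [y01 hit]]|miss] :=
  pselect (exists y, 0 <= y < 1 /\ grid_pt N n < code t y <= grid_pt N n.+1).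
  suff -> : code_inv t' (grid_pt N n) = code_inv t' (grid_pt N n.+1).
    by rewrite subrr mulr0.
  apply: code_inv_flat => // y' _; rewrite grid_cellE => hit'.
  rewrite grid_cellE in hit.
  by move: neq_tk; rewrite (code_cell_tag hit hit' kN) eqxx.
suff -> : code_inv t (grid_pt N n) = code_inv t (grid_pt N n.+1).
  by rewrite subrr mul0r.
by apply: code_inv_flat => // y y01 hit; apply: miss; exists y.
Qed.

End grid.

Section family.
Context {R : realType}.
Implicit Types (r h : R).

Definition bits_of (s : bool) h : nat -> bool :=
  fun k => if k is k'.+1 then binary_digit h k' else s.

Definition family r h : R -> R :=
  (fun x => r / 2 * code_inv (bits_of true h) x) \-
  (fun x => r / 2 * code_inv (bits_of false h) x).

Lemma family_continuous r h : continuous (family r h).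
Proof. by move=> x; apply: cvgB; apply: cvgMr; exact: code_inv_continuous. Qed.

Lemma family0 r h : family r h 0 = 0.
Proof. by rewrite /family /= !code_inv0 mulr0 subrr. Qed.

Lemma family1 r h : family r h 1 = 0.
Proof. by rewrite /family /= !code_inv1 subrr. Qed.

Lemma scaled_code_inv_nondecreasing r t t' : 0 <= r ->
  {in `[0, 1] &, nondecreasing_fun (fun x => r / 2 * (code_inv t x + code_inv t' x))}.
Proof.
move=> r0 x y _ _ le_xy; rewrite ler_wpM2l ?divr_ge0// lerD//;
  exact: code_inv_nondecreasing.
Qed.

Lemma scaled_sum_incr_orth (c : R) (f1 f2 f3 f4 : R -> R) x x' :
  (f1 x' - f1 x) * (f2 x' - f2 x) = 0 -> (f1 x' - f1 x) * (f3 x' - f3 x) = 0 ->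
  (f4 x' - f4 x) * (f2 x' - f2 x) = 0 -> (f4 x' - f4 x) * (f3 x' - f3 x) = 0 ->
  (c * (f1 x' + f4 x') - c * (f1 x + f4 x)) *
  (c * (f2 x' + f3 x') - c * (f2 x + f3 x)) = 0.
Proof.
move=> o12 o13 o42 o43.
transitivity (c ^+ 2 * ((f1 x' - f1 x) * (f2 x' - f2 x) + (f1 x' - f1 x) * (f3 x' - f3 x) +
                        (f4 x' - f4 x) * (f2 x' - f2 x) + (f4 x' - f4 x) * (f3 x' - f3 x))).
  by ring.
by rewrite o12 o13 o42 o43 !addr0 mulr0.
Qed.

Lemma total_variation_family_le r h : 0 <= r ->
  (total_variation 0 1 (family r h) <= r%:E)%E.
Proof.
move=> r0; have nd t : {in `[0, 1] &, nondecreasing_fun (fun x => r / 2 * code_inv t x)}.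
  by move=> x y _ _ le_xy; rewrite ler_wpM2l ?divr_ge0// code_inv_nondecreasing.
apply: le_trans (total_variationB_le ler01 (nd _) (nd _)) _.
by rewrite !code_inv0 !code_inv1 lee_fin; lra.
Qed.

Lemma total_variation_familyB r h1 h2 : 0 <= r ->
  0 <= h1 < 1 -> 0 <= h2 < 1 -> h1 != h2 ->
  total_variation 0 1 (family r h1 \- family r h2) = (2 * r)%:E.
Proof.
move=> r0 h1_01 h2_01 neq_h; have [k neq_k] := binary_digit_inj h1_01 h2_01 neq_h.
set t1 := bits_of true h1; set t2 := bits_of false h1.
set t3 := bits_of true h2; set t4 := bits_of false h2.
have -> : family r h1 \- family r h2 =
    (fun x => r / 2 * (code_inv t1 x + code_inv t4 x)) \-
    (fun x => r / 2 * (code_inv t2 x + code_inv t3 x)).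
  apply/funext => x; rewrite /family /=.
  (* Generalize first: ring would compare the code_inv atoms by unfolding them. *)
  move: (r / 2) (code_inv t1 x) (code_inv t2 x) (code_inv t3 x) (code_inv t4 x).
  by move=> c a1 a2 a3 a4; ring.
rewrite (total_variationB_orth (itv_partition_grid k.+2)); last 3 first.
- exact: scaled_code_inv_nondecreasing.
- exact: scaled_code_inv_nondecreasing.
- move=> n; rewrite size_grid => nN; rewrite !nth_grid ?(ltnW nN)//.
  apply: scaled_sum_incr_orth.
  + exact: (code_inv_grid_orth (k := 0%N)).
  + exact: (code_inv_grid_orth (k := k.+1)).
  + by apply: (code_inv_grid_orth (k := k.+1)); rewrite // eq_sym.
  + exact: (code_inv_grid_orth (k := 0%N)).
by rewrite !code_inv0 !code_inv1; congr (_%:E); lra.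
Qed.

End family.

Theorem mainTheorem6 (R : realType) (r : R) (hr : 0 < r) :
  exists (J : interval R) (F : R -> R -> R),
    ~ countable [set` J] /\
    (forall h, h \in J ->
       [/\ CBV (F h), BVnorm (F h) <= r, F h 0 = 0 & F h 1 = 0]) /\
    (forall h1 h2, h1 \in J -> h2 \in J -> h1 != h2 ->
       BVnorm (F h1 \- F h2) = 2 * r).
Proof.
exists `[0, 1[%R, (family r); split; [|split].
- move/countable_lebesgue_measure0; rewrite lebesgue_measure_itv /= lte_fin ltr01.
  by move/eqP; rewrite sube0 eqe oner_eq0.
- move=> h _; have TV_le := total_variation_family_le h (ltW hr).
  have TV_ge0 := total_variation_ge0 (family r h) ler01.
  have TV_fin : total_variation 0 1 (family r h) \is a fin_num.
    by rewrite ge0_fin_numE// (le_lt_trans TV_le) ?ltry.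
  split; last 2 first.
  + exact: family0.
  + exact: family1.
  + split; first exact/continuous_subspaceT/family_continuous.
    exact/bounded_variationP.
  + by rewrite /BVnorm family0 normr0 add0r -lee_fin fineK.
- move=> h1 h2; rewrite !in_itv /= => h1_01 h2_01 neq_h.
  by rewrite /BVnorm total_variation_familyB ?(ltW hr)// /= !family0 subrr normr0 add0r.
Qed.
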